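(* Let $f(x)=\sum_{i=1}^n f_i(x_i)$ with $f_i(x_i)=a_ix_i^3+b_ix_i^2+c_ix_i+d_i\in\mathbb{Z}[x_i]$ and $a_i\ne0$ for all $i\in[n]$, and suppose all coefficients of $f$ have absolute value at most $H$. Suppose $x^*$ is the unique local minimum of $f$ on $\mathbb{R}^n$ and that $\gamma^*:=f(x^* )$ is rational. Then $x^*$ is rational and its encoding size is bounded by a polynomial in $\log H$ and the encoding size of $\gamma^*$. *)

From HB Require Import structures.
From mathcomp Require Import all_boot all_order all_algebra.
From mathcomp Require Import all_classical all_reals all_analysis.
Set Implicit Arguments. Unset Strict Implicit. Unset Printing Implicit Defensive.
Import Order.TTheory GRing.Theory Num.Theory.
Import numFieldNormedType.Exports.
Local Open Scope ring_scope.

Definition sep_cubic (R : realType) (n : nat) (a b c d : 'I_n -> int)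
    (x : 'rV[R]_n) : R :=
  \sum_(i < n) ((a i)%:~R * x ord0 i ^+ 3 + (b i)%:~R * x ord0 i ^+ 2
                + (c i)%:~R * x ord0 i + (d i)%:~R).

Definition is_local_min (R : realType) (n : nat) (g : 'rV[R]_n -> R)
    (x : 'rV[R]_n) : Prop :=
  \forall y \near x, g x <= g y.

(* Binary encoding size of an integer: sign bit + number of bits of |z|. *)
Definition enc_size_int (z : int) : nat := 1 + up_log 2 (`|z|%N).+1.

Definition enc_size_rat (q : rat) : nat :=
  enc_size_int (numq q) + enc_size_int (denq q).

(* Let f(x) = sum_i f_i(x_i) with f_i = a_i t^3 + b_i t^2 + c_i t + d_i, a_i != 0.
   At a local minimum x each coordinate is a local minimum of f_i, so
   f_i'(x_i) = 0 and s_i := 3 a_i x_i + b_i >= 0; hence s_i^2 = D_i := b_i^2 - 3a_i c_i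
   and f_i(x_i) = d_i + E_i - w_i with E_i rational and w_i = 2 s_i^3 / (27 a_i^2).
   If f(x) is rational, sum_i w_i is rational, while each w_i >= 0 has rational
   square.  The algebraic core of the proof (sqrt_sum_closed) says that nonnegative
   reals with squares in a subfield K and sum in K all lie in K; it is proved by
   induction, passing to quadratic extensions K(x).  Thus each s_i^3 is rational,
   so s_i is an integer m_i with m_i^2 = D_i, and x_i = (m_i - b_i)/(3 a_i) has
   numerator and denominator bounded by 3H, giving an O(log H) encoding size.
   The argument applies to every local minimum. *)
From HB Require Import structures.
From mathcomp Require Import all_boot all_order all_algebra.
From mathcomp Require Import all_classical all_reals all_analysis.
Import Order.TTheory GRing.Theory Num.Theory.
Import numFieldNormedType.Exports.
Local Open Scope ring_scope.
From mathcomp Require Import zify ring lra.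
Set Implicit Arguments. Unset Strict Implicit.

Record is_subfield (R : fieldType) (K : R -> Prop) : Prop := {
  sf1 : K 1;
  sfD : forall x y, K x -> K y -> K (x + y);
  sfN : forall x, K x -> K (- x);
  sfM : forall x y, K x -> K y -> K (x * y);
  sfV : forall x, K x -> K x^-1 }.

Section Subfield.
Variables (R : fieldType) (K : R -> Prop).
Hypothesis HK : is_subfield K.

Lemma sf0 : K 0.
Proof. by rewrite -(subrr 1); apply: (sfD HK); [apply: (sf1 HK)|apply: (sfN HK) (sf1 HK)]. Qed.

Lemma sfB x y : K x -> K y -> K (x - y).
Proof. by move=> Kx Ky; apply: (sfD HK) => //; apply: (sfN HK). Qed.

Lemma sfdiv x y : K x -> K y -> K (x / y).
Proof. by move=> Kx Ky; apply: (sfM HK) => //; apply: (sfV HK). Qed.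

Lemma sf_indep x a b : ~ K x -> K a -> K b -> K (a + b * x) -> b = 0.
Proof.
move=> Kx Ka Kb Kab; apply/eqP/negP => /negP b0; apply: Kx.
have -> : x = ((a + b * x) - a) / b by field.
by apply: sfdiv => //; apply: sfB.
Qed.

Definition adjoin (x : R) : R -> Prop :=
  fun z => exists a b, K a /\ K b /\ z = a + b * x.

Lemma adjoin_base x z : K z -> adjoin x z.
Proof. by move=> Kz; exists z, 0; rewrite mul0r addr0; split; [|split; [exact: sf0|]]. Qed.

Lemma adjoin_norm_neq0 x a b : ~ K x -> K a -> K b -> a + b * x != 0 ->
  a ^+ 2 - b ^+ 2 * x ^+ 2 != 0.
Proof.
move=> Kx Ka Kb ab0; apply/eqP => N0.
have [b0|b0] := eqVneq b 0.
  move: N0 ab0; rewrite b0 expr0n /= !mul0r subr0 addr0 => /eqP.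
  by rewrite sqrf_eq0 => ->.
have : (x - a / b) * (x + a / b) = 0.
  have -> : (x - a / b) * (x + a / b) = - (a ^+ 2 - b ^+ 2 * x ^+ 2) / b ^+ 2 by field.
  by rewrite N0 oppr0 mul0r.
move/eqP; rewrite mulf_eq0 => /orP[] /eqP xab; apply: Kx.
  by rewrite (subr0_eq xab); apply: sfdiv.
by rewrite -(opprK x) (addr0_eq xab); apply: (sfN HK); apply: sfdiv.
Qed.

Lemma adjoin_subfield x : ~ K x -> K (x ^+ 2) -> is_subfield (adjoin x).
Proof.
move=> Kx Kx2; split.
- exact/adjoin_base/(sf1 HK).
- move=> _ _ [a [b [Ka [Kb ->]]]] [a' [b' [Ka' [Kb' ->]]]].
  by exists (a + a'), (b + b'); split; [exact: (sfD HK)|split; [exact: (sfD HK)|ring]].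
- move=> _ [a [b [Ka [Kb ->]]]].
  by exists (- a), (- b); split; [exact: (sfN HK)|split; [exact: (sfN HK)|ring]].
- move=> _ _ [a [b [Ka [Kb ->]]]] [a' [b' [Ka' [Kb' ->]]]].
  exists (a * a' + b * b' * x ^+ 2), (a * b' + a' * b); split.
    by apply: (sfD HK); apply: (sfM HK) => //; apply: (sfM HK).
  by split; [apply: (sfD HK); apply: (sfM HK)|ring].
- move=> _ [a [b [Ka [Kb ->]]]].
  have [->|z0] := eqVneq (a + b * x) 0; first by rewrite invr0; exact/adjoin_base/sf0.
  have N0 := adjoin_norm_neq0 Kx Ka Kb z0.
  have KN : K (a ^+ 2 - b ^+ 2 * x ^+ 2).
    by apply: sfB; apply: (sfM HK) => //; apply: (sfM HK).
  exists (a / (a ^+ 2 - b ^+ 2 * x ^+ 2)), (- b / (a ^+ 2 - b ^+ 2 * x ^+ 2)).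
  split; [exact: sfdiv|split; [apply: sfdiv => //; exact: (sfN HK)|]].
  by apply: (mulfI z0); rewrite mulfV //; field; rewrite exprMn.
Qed.

End Subfield.

Section OrderedSubfield.
Variables (R : realFieldType) (K : R -> Prop).
Hypothesis HK : is_subfield K.

(* In K(x), for x >= 0 outside K with x^2 in K, an element y >= 0 with y^2 in
   K is either in K or a nonnegative K-multiple of x: the cross term 2ab of
   y^2 = (a + b x)^2 must vanish. *)
Lemma adjoin_sqrt_form x y : ~ K x -> 0 <= x -> K (x ^+ 2) ->
  adjoin K x y -> 0 <= y -> K (y ^+ 2) ->
  exists a b, K a /\ K b /\ 0 <= b /\ y = a + b * x.
Proof.
move=> Kx x0 Kx2 [a [b [Ka [Kb ey]]]] y0 Ky2.
have K2 : K 2 by apply: (sfD HK); apply: (sf1 HK).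
have Ksq : K (a ^+ 2 + b ^+ 2 * x ^+ 2).
  by apply: (sfD HK); apply: (sfM HK) => //; apply: (sfM HK).
have cross : 2 * a * b = 0.
  apply: (sf_indep HK Kx Ksq); first by apply: (sfM HK) => //; apply: (sfM HK).
  by have <- : y ^+ 2 = a ^+ 2 + b ^+ 2 * x ^+ 2 + 2 * a * b * x by rewrite ey; ring.
move/eqP: cross; rewrite !mulf_eq0 pnatr_eq0 /= => /orP[] /eqP ab0; last first.
  by exists a, 0; rewrite ey ab0; split; [|split; [exact: sf0|]].
have x_gt0 : 0 < x.
  by rewrite lt_neqAle x0 andbT; apply/eqP => x0'; apply: Kx; rewrite -x0'; exact: sf0.
exists 0, b; rewrite ey ab0 add0r in y0 *; split; first exact: sf0.
by split => //; split; first by rewrite pmulr_lge0 in y0.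
Qed.

Lemma adjoin_sqrt_sum x (l : seq R) : ~ K x -> 0 <= x -> K (x ^+ 2) ->
  (forall y, y \in l -> adjoin K x y /\ 0 <= y /\ K (y ^+ 2)) ->
  exists A B, K A /\ K B /\ 0 <= B /\ \sum_(y <- l) y = A + B * x.
Proof.
move=> Kx x0 Kx2; elim: l => [|y l IH] Hl.
  by exists 0, 0; rewrite big_nil mul0r addr0; split; [exact: sf0|split; [exact: sf0|]].
have [|A [B [KA [KB [B0 eA]]]]] := IH.
  by move=> z zl; apply: Hl; rewrite in_cons zl orbT.
have [Ky [y0 Ky2]] := Hl y (mem_head _ _).
have [a [b [Ka [Kb [b0 ey]]]]] := adjoin_sqrt_form Kx x0 Kx2 Ky y0 Ky2.
exists (a + A), (b + B); rewrite big_cons eA ey.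
split; [exact: (sfD HK)|split; [exact: (sfD HK)|split; [exact: addr_ge0|ring]]].
Qed.

End OrderedSubfield.

(* By induction on the list: if the
   head x were outside K, the tail would lie in K(x) (induction hypothesis),
   so the sum would be A + (B + 1) x with B >= 0, forcing x into K. *)
Lemma sqrt_sum_closed (R : realFieldType) (l : seq R) (K : R -> Prop) :
  is_subfield K -> (forall y, y \in l -> 0 <= y /\ K (y ^+ 2)) ->
  K (\sum_(y <- l) y) -> forall y, y \in l -> K y.
Proof.
elim: l K => [|x l IH] K HK Hl; first by move=> _ y; rewrite in_nil.
rewrite big_cons => Ksum.
have [x0 Kx2] := Hl x (mem_head _ _).
have Hl' z : z \in l -> 0 <= z /\ K (z ^+ 2).
  by move=> zl; apply: Hl; rewrite in_cons zl orbT.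
have [Kx|Kx] := pselect (K x).
  have Kl : K (\sum_(y <- l) y).
    have -> : \sum_(y <- l) y = (x + \sum_(y <- l) y) - x by ring.
    exact: sfB.
  by move=> y /predU1P[-> //|yl]; exact: IH HK Hl' Kl y yl.
exfalso; have HKx := adjoin_subfield HK Kx Kx2.
have Kxl : adjoin K x (\sum_(y <- l) y).
  exists (x + \sum_(y <- l) y), (-1).
  by split=> //; split; [exact/(sfN HK)/(sf1 HK)|ring].
have Kxl' z : z \in l -> 0 <= z /\ adjoin K x (z ^+ 2).
  by move=> zl; have [z0 Kz2] := Hl' z zl; split => //; exact: adjoin_base.
have [|A [B [KA [KB [B0 eA]]]]] := adjoin_sqrt_sum HK Kx x0 Kx2 (l := l).
  by move=> z zl; have [z0 Kz2] := Hl' z zl; split => //; exact: IH HKx Kxl' Kxl z zl.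
have := sf_indep HK Kx (sfB HK KA Ksum) (sfD HK KB (sf1 HK)).
have -> : A - (x + \sum_(y <- l) y) + (B + 1) * x = 0 by rewrite eA; ring.
by move=> /(_ (sf0 HK)) /eqP; rewrite paddr_eq0 ?oner_eq0 ?andbF.
Qed.

Section CubicLocalMin.
Variable R : realFieldType.

Lemma ge0_of_small_defect (q M e : R) : 0 < e ->
  (forall h, 0 < h -> h < e -> - (h * M) <= q) -> 0 <= q.
Proof.
move=> e0 Hq; rewrite leNgt; apply/negP => q0.
have M1 : 0 < `|M| + 1 by rewrite ltr_wpDl.
pose h := Num.min (e / 2) (- q / (`|M| + 1)).
have qM : 0 < - q / (`|M| + 1) by apply: divr_gt0; lra.
have h0 : 0 < h by rewrite lt_min qM andbT; lra.
have he : h < e by rewrite /h gt_min; apply/orP; left; lra.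
have hq : h * (`|M| + 1) <= - q by rewrite -ler_pdivlMr // /h ge_min lexx orbT.
have hM : h * M <= h * `|M| by apply: ler_wpM2l; [exact: ltW|exact: ler_norm].
by have := Hq h h0 he; nra.
Qed.

Lemma affine_small_bound (B a h : R) : 0 < h -> h <= 1 -> B + a * h <= `|B| + `|a|.
Proof.
move=> h0 h1; apply: lerD; first exact: ler_norm.
by rewrite (le_trans (ler_norm _)) // normrM (gtr0_norm h0) ler_piMr.
Qed.

Lemma cubic_local_min0 (p B a e : R) : 0 < e ->
  (forall h, `|h| < e -> 0 <= p * h + B * h ^+ 2 + a * h ^+ 3) -> p = 0 /\ 0 <= B.
Proof.
move=> e0 Hmin; pose e1 := Num.min e 1.
have e10 : 0 < e1 by rewrite lt_min e0 ltr01.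
have small h : 0 < h -> h < e1 -> `|h| < e /\ h <= 1.
  by move=> h0; rewrite gtr0_norm // lt_min => /andP[he h1]; split; [|exact: ltW].
have cancel_pos (h X : R) : 0 < h -> 0 <= h * X -> 0 <= X by move=> h0; rewrite pmulr_rge0.
have p_ge0 : 0 <= p.
  apply: (ge0_of_small_defect (M := `|B| + `|a|) e10) => h h0 /(small h h0) [he h1].
  have : 0 <= p + h * (B + a * h).
    by apply: (cancel_pos h) => //; have := Hmin h he; nra.
  have := affine_small_bound B a h0 h1; nra.
have p_le0 : 0 <= - p.
  apply: (ge0_of_small_defect (M := `|B| + `|a|) e10) => h h0 /(small h h0) [he h1].
  have : 0 <= - p + h * (B + (- a) * h).
    by apply: (cancel_pos h) => //; have := Hmin (- h); rewrite normrN => /(_ he); nra.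
  have := affine_small_bound B (- a) h0 h1; rewrite normrN; nra.
have p0 : p = 0 by lra.
split => //; apply: (ge0_of_small_defect (M := `|a|) e10) => h h0 /(small h h0) [he _].
have : 0 <= B + a * h.
  by apply: (cancel_pos (h ^+ 2)); [exact: exprn_gt0|have := Hmin h he; rewrite p0; nra].
have := ler_norm a; nra.
Qed.

Definition cubic (a b c d t : R) : R := a * t ^+ 3 + b * t ^+ 2 + c * t + d.

(* Necessary conditions at a local minimum t of a cubic: the derivative
   3a t^2 + 2b t + c vanishes and half the second derivative, 3a t + b, is
   nonnegative. *)
Lemma cubic_local_min (a b c d t e : R) : 0 < e ->
  (forall h, `|h| < e -> cubic a b c d t <= cubic a b c d (t + h)) ->
  3 * a * t ^+ 2 + 2 * b * t + c = 0 /\ 0 <= 3 * a * t + b.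
Proof.
move=> e0 Hmin; apply: (cubic_local_min0 (a := a) e0) => h /Hmin.
rewrite -subr_ge0 /cubic.
have -> : a * (t + h) ^+ 3 + b * (t + h) ^+ 2 + c * (t + h) + d
    - (a * t ^+ 3 + b * t ^+ 2 + c * t + d) =
  (3 * a * t ^+ 2 + 2 * b * t + c) * h + (3 * a * t + b) * h ^+ 2 + a * h ^+ 3 by ring.
done.
Qed.

Lemma cubic_critical (a b c d t : R) : a != 0 -> 3 * a * t ^+ 2 + 2 * b * t + c = 0 ->
  (3 * a * t + b) ^+ 2 = b ^+ 2 - 3 * a * c /\
  cubic a b c d t = d + (2 * b ^+ 3 - 9 * a * b * c) / (27 * a ^+ 2)
                      - 2 * (3 * a * t + b) ^+ 3 / (27 * a ^+ 2).
Proof.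
move=> a0 crit; have eC : c = - (3 * a * t ^+ 2 + 2 * b * t).
  by apply/eqP; rewrite -subr_eq0 opprK addrC crit.
split; rewrite eC /cubic; first by ring.
by field; rewrite a0.
Qed.

End CubicLocalMin.

Lemma local_min_coord (R : realType) (n : nat) (a b c d : 'I_n -> int)
    (xs : 'rV[R]_n) (i : 'I_n) :
  is_local_min (sep_cubic a b c d) xs ->
  exists2 e : R, 0 < e & forall h : R, `|h| < e ->
    cubic (a i)%:~R (b i)%:~R (c i)%:~R (d i)%:~R (xs ord0 i) <=
    cubic (a i)%:~R (b i)%:~R (c i)%:~R (d i)%:~R (xs ord0 i + h).
Proof.
move=> /nbhs_ballP [e e0 He]; exists e => // h he.
pose y : 'rV[R]_n := \row_j (if j == i then xs ord0 i + h else xs ord0 j).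
have By : ball xs e y.
  split => // i' j; rewrite ord1 !mxE.
  case: eqP => [->|_]; last exact: ballxx.
  by rewrite /ball /= opprD addrA subrr add0r normrN.
have := He y By; rewrite /sep_cubic (bigD1 i) //= [X in _ <= X](bigD1 i) //=.
rewrite [X in _ <= _ + X](eq_bigr (fun j => (a j)%:~R * xs ord0 j ^+ 3
    + (b j)%:~R * xs ord0 j ^+ 2 + (c j)%:~R * xs ord0 j + (d j)%:~R)).
  by rewrite !mxE eqxx lerD2r.
by move=> j /negPf ji; rewrite !mxE ji.
Qed.

Section RationalElements.
Variable R : realType.

Definition is_rat (z : R) : Prop := exists q : rat, z = ratr q.

Lemma is_rat_subfield : is_subfield is_rat.
Proof.
split.
- by exists 1; rewrite rmorph1.
- by move=> _ _ [q ->] [q' ->]; exists (q + q'); rewrite rmorphD.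
- by move=> _ [q ->]; exists (- q); rewrite rmorphN.
- by move=> _ _ [q ->] [q' ->]; exists (q * q'); rewrite rmorphM.
- by move=> _ [q ->]; exists q^-1; rewrite fmorphV.
Qed.

Lemma is_rat_int (z : int) : is_rat z%:~R.
Proof. by exists z%:~R; rewrite ratr_int. Qed.

Lemma is_rat_nat (k : nat) : is_rat k%:R.
Proof. by exists k%:R; rewrite ratr_nat. Qed.

Lemma is_ratX x k : is_rat x -> is_rat (x ^+ k).
Proof. by move=> [q ->]; exists (q ^+ k); rewrite rmorphXn. Qed.

Lemma is_rat_sum n (F : 'I_n -> R) : (forall i, is_rat (F i)) -> is_rat (\sum_i F i).
Proof.
move=> HF; elim/big_ind: _ => //; first by exists 0; rewrite rmorph0.
exact: (sfD is_rat_subfield).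
Qed.

End RationalElements.

Ltac rat_closure := repeat first
  [ apply: is_rat_nat | apply: is_rat_int | apply: is_ratX
  | apply: (sfD (is_rat_subfield _)) | apply: (sfM (is_rat_subfield _))
  | apply: (sfN (is_rat_subfield _)) | apply: (sfV (is_rat_subfield _)) ].

Lemma rat_sq_int (q : rat) (D : int) : q ^+ 2 = D%:~R -> q = (numq q)%:~R.
Proof.
case: ratP => m k cmk Hq.
have E : m ^+ 2 = D * (k.+1)%:Z ^+ 2.
  apply: (@intr_inj rat); rewrite !rmorphXn rmorphM /= -Hq.
  field; apply: lt0r_neq0; have := ler0n rat k; lra.
have E' : (`|m| ^ 2 = `|D| * k.+1 ^ 2)%N by rewrite -abszX E abszM abszX.
have dv : (k.+1 %| `|m| ^ 2)%N by rewrite E' dvdn_mull // dvdn_exp.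
have := coprime_dvdl dv (coprimeXl 2 cmk).
by rewrite /coprime gcdnn => /eqP ->; rewrite divr1.
Qed.

(* A real s >= 0 with s^2 = D an integer and s^3 rational is an integer whose
   square is D: if D != 0 then s = s^3 / D is rational, hence an integer. *)
Lemma int_sqrt_of_rat_cube (R : realType) (s : R) (D : int) :
  s ^+ 2 = D%:~R -> is_rat (s ^+ 3) -> exists2 m : int, s = m%:~R & m ^+ 2 = D.
Proof.
move=> s2 [r s3].
have [D0|D0] := eqVneq D 0.
  exists 0; last by rewrite D0.
  by apply/eqP; rewrite -sqrf_eq0 s2 D0.
have DR0 : D%:~R != 0 :> R by rewrite intr_eq0.
pose q : rat := r / D%:~R.
have sq : s = ratr q.
  rewrite /q fmorph_div /= rmorph_int -s3 -s2 exprS mulfK //.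
  by rewrite s2.
have q2 : q ^+ 2 = D%:~R.
  by apply: (fmorph_inj (@ratr R)); rewrite rmorphXn /= -sq s2 ratr_int.
exists (numq q).
  by rewrite sq {1}(rat_sq_int q2) ratr_int.
by apply: (@intr_inj rat); rewrite rmorphXn /= -(rat_sq_int q2).
Qed.

Lemma local_min_conditions (R : realType) (n : nat) (a b c d : 'I_n -> int)
    (xs : 'rV[R]_n) (i : 'I_n) :
  is_local_min (sep_cubic a b c d) xs ->
  3 * (a i)%:~R * xs ord0 i ^+ 2 + 2 * (b i)%:~R * xs ord0 i + (c i)%:~R = 0 /\
  0 <= 3 * (a i)%:~R * xs ord0 i + (b i)%:~R.
Proof. by move=> /(local_min_coord i) [e e0 He]; exact: cubic_local_min e0 He. Qed.

(* The value is sum_i (d_i + E_i) - sum_i w_i with E_i rational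
   and w_i = 2 s_i^3 / (27 a_i^2) >= 0 having rational square 4 D_i^3/(27a_i^2)^2
   (D_i = b_i^2 - 3 a_i c_i = s_i^2), so sqrt_sum_closed makes each w_i rational. *)
Lemma local_min_rat_cubes (R : realType) (n : nat) (a b c d : 'I_n -> int)
    (xs : 'rV[R]_n) (gamma : rat) :
  (forall i, a i != 0) -> is_local_min (sep_cubic a b c d) xs ->
  sep_cubic a b c d xs = ratr gamma ->
  forall i, is_rat ((3 * (a i)%:~R * xs ord0 i + (b i)%:~R) ^+ 3).
Proof.
move=> a0 lmin fval.
pose s i : R := 3 * (a i)%:~R * xs ord0 i + (b i)%:~R.
pose w i : R := 2 * s i ^+ 3 / (27 * (a i)%:~R ^+ 2).
pose E i : R := (2 * (b i)%:~R ^+ 3 - 9 * (a i)%:~R * (b i)%:~R * (c i)%:~R)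
                / (27 * (a i)%:~R ^+ 2).
have aR0 i : (a i)%:~R != 0 :> R by rewrite intr_eq0.
have crit i := cubic_critical (d i)%:~R (aR0 i) (proj1 (local_min_conditions i lmin)).
have w_sum : \sum_i w i = \sum_i ((d i)%:~R + E i) - ratr gamma.
  rewrite -fval /sep_cubic -sumrB; apply: eq_bigr => i _.
  by have := proj2 (crit i); rewrite /cubic => ->; rewrite /w /E /s; ring.
have w_rat i : is_rat (w i).
  apply: (sqrt_sum_closed (l := [seq w j | j <- enum 'I_n]) (is_rat_subfield R)).
  - move=> _ /mapP [j _ ->]; split.
      apply: mulr_ge0; last by rewrite invr_ge0 mulr_ge0 ?sqr_ge0.
      by rewrite mulr_ge0 ?exprn_ge0 //; exact: (proj2 (local_min_conditions j lmin)).
    have -> : w j ^+ 2 = 4 * (s j ^+ 2) ^+ 3 / (27 * (a j)%:~R ^+ 2) ^+ 2.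
      by rewrite /w; field; rewrite aR0.
    rewrite (proj1 (crit j)); rat_closure; exact: is_rat_int.
  - rewrite big_map big_enum /= w_sum; apply: (sfB (is_rat_subfield R)).
      by apply: is_rat_sum => j; rewrite /E; rat_closure.
    by exists gamma.
  - by rewrite map_f // mem_enum.
move=> k; have -> : s k ^+ 3 = w k * (27 * (a k)%:~R ^+ 2) / 2.
  by rewrite /w; field; rewrite aR0.
apply: (sfM (is_rat_subfield R)); last by rat_closure.
by apply: (sfM (is_rat_subfield R)); [exact: w_rat|rat_closure].
Qed.

Lemma numden_bound (m k : int) : k != 0 ->
  `|numq (m%:~R / k%:~R : rat)| <= `|m| /\ denq (m%:~R / k%:~R : rat) <= `|k|.
Proof.
move=> k0; move: (divqP m k) k0 => [_|k' q k'0 _]; first by rewrite eqxx.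
rewrite !normrM (gtr0_norm (denq_gt0 q)).
have : 1 <= `|k'| by move: k'0; lia.
have := denq_gt0 q; have := normr_ge0 (numq q); nia.
Qed.

Lemma enc_size_int_bound (z : int) (H : nat) : `|z| <= (3 * H)%N%:Z ->
  (enc_size_int z <= 3 + up_log 2 H.+1)%N.
Proof.
move=> hz; rewrite /enc_size_int.
have hL := up_logP H.+1 (isT : (1 < 2)%N).
have h1 : ((`|z|%N).+1 <= 2 ^ (2 + up_log 2 H.+1))%N.
  by rewrite expnD; move: hL; set X := (2 ^ up_log 2 H.+1)%N; move: hz; lia.
have := up_log_min (isT : (1 < 2)%N) h1; lia.
Qed.

Lemma crit_point_enc_bound (m a b c : int) (H : nat) : a != 0 ->
  `|a| <= H%:Z -> `|b| <= H%:Z -> `|c| <= H%:Z -> m ^+ 2 = b ^+ 2 - 3 * a * c ->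
  (enc_size_rat ((m - b)%:~R / (3 * a)%:~R) <= 2 * (3 + up_log 2 H.+1))%N.
Proof.
move=> a0 ha hb hc hm; have a3 : 3 * a != 0 by rewrite mulf_neq0.
have [hnum hden] := numden_bound (m - b) a3.
have mb : `|m - b| <= (3 * H)%N%:Z by nia.
have a3H : `|3 * a| <= (3 * H)%N%:Z by nia.
have e1 := enc_size_int_bound (le_trans hnum mb).
have e2 := enc_size_int_bound (z := denq ((m - b)%:~R / (3 * a)%:~R)) (H := H).
rewrite gtr0_norm ?denq_gt0 // in e2; have := e2 (le_trans hden a3H).
by rewrite /enc_size_rat; lia.
Qed.

Theorem theorem5 :
  exists C k : nat,
  forall (R : realType) (n : nat) (a b c d : 'I_n -> int) (H : nat)
         (xs : 'rV[R]_n) (gamma : rat),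
    (forall i, a i != 0) ->
    (forall i, `|a i| <= H%:Z /\ `|b i| <= H%:Z /\ `|c i| <= H%:Z) ->
    `|\sum_(i < n) d i| <= H%:Z ->
    is_local_min (sep_cubic a b c d) xs ->
    (forall y, is_local_min (sep_cubic a b c d) y -> y = xs) ->
    sep_cubic a b c d xs = ratr gamma ->
    exists xq : 'rV[rat]_n,
      xs = map_mx ratr xq /\
      forall i : 'I_n,
        (enc_size_rat (xq ord0 i) <= C * (1 + up_log 2 H.+1 + enc_size_rat gamma) ^ k)%N.
Proof.
exists 6%N, 1%N => R n a b c d H xs gamma a0 hH _ lmin _ fval.
have s_int i : exists m : int,
    3 * (a i)%:~R * xs ord0 i + (b i)%:~R = m%:~R :> R /\ m ^+ 2 = b i ^+ 2 - 3 * a i * c i.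
  have aR0 : (a i)%:~R != 0 :> R by rewrite intr_eq0.
  have [crit _] := local_min_conditions i lmin.
  have s2 : (3 * (a i)%:~R * xs ord0 i + (b i)%:~R) ^+ 2
             = (b i ^+ 2 - 3 * a i * c i)%:~R :> R.
    by rewrite (proj1 (cubic_critical 0 aR0 crit)) rmorphB rmorphXn !rmorphM.
  have [m sm m2] := int_sqrt_of_rat_cube s2 (local_min_rat_cubes a0 lmin fval i).
  by exists m.
have [m Hm] := fin_all_exists s_int.
exists (\row_i ((m i - b i)%:~R / (3 * a i)%:~R)); split.
  apply/rowP => i; have [sm _] := Hm i; rewrite !mxE fmorph_div !rmorph_int.
  rewrite rmorphB rmorphM /= -sm.
  by field; rewrite intr_eq0.
move=> i; rewrite mxE; have [ha [hb hc]] := hH i.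
have := crit_point_enc_bound (a0 i) ha hb hc (proj2 (Hm i)).
by rewrite expn1; lia.
Qed.
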